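(* Let $M_1,\dots,M_n\in\mathrm{St}_{p,k}$ be such that $A=\frac1n\sum_{i=1}^n M_i$ has full column rank $k$, and let $G=\operatorname{uf}(A)=A(A^\top A)^{-1/2}$ be the orthogonal factor of the polar decomposition of $A$. Then $$\frac1n\sum_{i=1}^n P^{\mathrm{St}}_G(M_i-G)=0,$$ so that $G$ is a (closed-form) solution of the $R$-barycenter fixed-point equation $G=R^{\mathrm{o}}_G\big(\frac1n\sum_{i=1}^n (R^{\mathrm{o}}_G)^{-1}(M_i)\big)$ associated with the orthographic retraction $R^{\mathrm{o}}$ on $\mathrm{St}_{p,k}$, whose inverse is $(R^{\mathrm{o}}_G)^{-1}(V)=P^{\mathrm{St}}_G(V-G)$. *)

From mathcomp Require Import all_boot all_order all_algebra.
Set Implicit Arguments. Unset Strict Implicit. Unset Printing Implicit Defensive.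
Import Order.TTheory GRing.Theory Num.Theory.
Local Open Scope ring_scope.

Definition stiefel (R : numDomainType) (p k : nat) (M : 'M[R]_(p, k)) : Prop :=
  M^T *m M = 1%:M.

Definition symm (R : numFieldType) (k : nat) (X : 'M[R]_k) : 'M[R]_k :=
  2^-1 *: (X + X^T).

(* Orthogonal projection onto the tangent space T_G St_{p,k}
   (Euclidean/embedded metric): P_G(V) = V - G sym(G^T V). *)
Definition projSt (R : numFieldType) (p k : nat) (G V : 'M[R]_(p, k))
  : 'M[R]_(p, k) :=
  V - G *m symm (G^T *m V).

Definition sym_posdef (R : numDomainType) (k : nat) (Q : 'M[R]_k) : Prop :=
  Q^T = Q /\ forall v : 'rV[R]_k, v != 0 -> 0 < (v *m Q *m v^T) 0 0.

Definition is_psd_sqrt (R : numDomainType) (k : nat) (S Q : 'M[R]_k) : Prop :=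
  sym_posdef Q /\ Q *m Q = S.

(* orthogonal polar factor uf(A) = A (A^T A)^{-1/2}, given Q = (A^T A)^{1/2} *)
Definition uf_with (R : fieldType) (p k : nat) (A : 'M[R]_(p, k)) (Q : 'M[R]_k)
  : 'M[R]_(p, k) :=
  A *m invmx Q.

(* The point is that A = G Q with Q = (A^T A)^{1/2} symmetric, so A - G = G (Q - 1) lies in
   the normal space G Sym_k of the Stiefel manifold at G, which the tangent projection kills.
   Since the projection is linear, it maps the mean of the M_i - G, which is A - G, to 0. *)
From HB Require Import structures.
From mathcomp Require Import all_boot all_order all_algebra.
Import Order.TTheory GRing.Theory Num.Theory.
Local Open Scope ring_scope.

Section TangentProjection.
Variables (R : numFieldType) (p k : nat).

Lemma symm_is_linear : linear (@symm R k).
Proof.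
move=> a X Y; rewrite /symm linearP /= [a *: (_ *: _)]scalerA mulrC -scalerA -scalerDr.
by rewrite [a *: (_ + _)]scalerDr addrACA.
Qed.

HB.instance Definition _ :=
  GRing.isLinear.Build R 'M[R]_k 'M[R]_k *:%R (@symm R k) symm_is_linear.

Lemma symm_id (S : 'M[R]_k) : S^T = S -> symm S = S.
Proof.
move=> Ssym; rewrite /symm Ssym -mulr2n -scaler_nat scalerA mulVf ?scale1r //.
by rewrite pnatr_eq0.
Qed.

Lemma projSt_is_linear (G : 'M[R]_(p, k)) : linear (projSt G).
Proof.
move=> a V W; rewrite /projSt !linearP /=.
by rewrite scalerN addrACA scalerBr.
Qed.

HB.instance Definition _ (G : 'M[R]_(p, k)) :=
  GRing.isLinear.Build R 'M[R]_(p, k) 'M[R]_(p, k) *:%R (projSt G)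
    (projSt_is_linear G).

Lemma projSt_normal (G : 'M[R]_(p, k)) (S : 'M[R]_k) :
  stiefel G -> S^T = S -> projSt G (G *m S) = 0.
Proof. by move=> GG Ssym; rewrite /projSt mulmxA GG mul1mx symm_id ?subrr. Qed.

End TangentProjection.

Lemma sym_posdef_unit (R : numFieldType) (k : nat) (Q : 'M[R]_k) :
  sym_posdef Q -> Q \in unitmx.
Proof.
case=> _ Qpos; rewrite unitmxE unitfE; apply/negP => /det0P [v v0 vQ].
by have := Qpos v v0; rewrite vQ mul0mx mxE ltxx.
Qed.

Section PolarFactor.
Variables (R : numFieldType) (p k : nat) (A : 'M[R]_(p, k)) (Q : 'M[R]_k).
Hypothesis QsqrtAA : is_psd_sqrt (A^T *m A) Q.

Let Qsym : Q^T = Q. Proof. by case: QsqrtAA => -[]. Qed.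
Let Qunit : Q \in unitmx. Proof. by case: QsqrtAA => /sym_posdef_unit. Qed.

Lemma uf_withK : uf_with A Q *m Q = A.
Proof. exact: mulmxKV. Qed.

Lemma trmx_uf_with_mul : (uf_with A Q)^T *m A = Q.
Proof.
case: QsqrtAA => _ QQ.
by rewrite trmx_mul trmx_inv Qsym -mulmxA -QQ mulmxA mulVmx ?mul1mx.
Qed.

Lemma uf_with_stiefel : stiefel (uf_with A Q).
Proof. by rewrite /stiefel {2}/uf_with mulmxA trmx_uf_with_mul mulmxV. Qed.

Lemma projSt_uf_with : projSt (uf_with A Q) (A - uf_with A Q) = 0.
Proof.
have -> : A - uf_with A Q = uf_with A Q *m (Q - 1%:M).
  by rewrite mulmxBr uf_withK mulmx1.
apply: projSt_normal; first exact: uf_with_stiefel.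
by rewrite raddfB /= Qsym trmx1.
Qed.

End PolarFactor.

Lemma mean_subr (R : fieldType) (V : lmodType R) (n : nat) (F : 'I_n -> V) (c : V) :
  n%:R != 0 :> R ->
  n%:R^-1 *: \sum_(i < n) (F i - c) = n%:R^-1 *: \sum_(i < n) F i - c.
Proof.
move=> n0; rewrite sumrB sumr_const card_ord -scaler_nat scalerBr scalerA.
by rewrite mulVf ?scale1r.
Qed.

Theorem mainTheorem3 (R : realFieldType) (p k n : nat)
  (M : 'I_n -> 'M[R]_(p, k)) (Q : 'M[R]_k) :
  (0 < n)%N ->
  (forall i, stiefel (M i)) ->
  let A := n%:R^-1 *: \sum_(i < n) M i in
  \rank A = k ->
  is_psd_sqrt (A^T *m A) Q ->
  let G := uf_with A Q in
  n%:R^-1 *: \sum_(i < n) projSt G (M i - G) = 0.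
Proof.
move=> n_gt0 _ A _ QsqrtAA G.
rewrite -linear_sum -linearZ mean_subr //; last by rewrite pnatr_eq0 -lt0n.
exact: projSt_uf_with.
Qed.
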